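(* The functor $\mathrm{Up}\circ\mathrm{Dn}:\mathbf{Poset}\to\mathbf{Poset}$ can be given a monad structure $(\mathrm{Up}\,\mathrm{Dn},\eta^1,\mu^1)$.
   Context: $\mathbf{Poset}$ is the category of partially ordered sets and monotone maps. $\mathrm{Up}$ sends a poset $(X,\le)$ to the set of its upward closed subsets ordered by reverse inclusion $\supseteq$, and a monotone $f:X\to Y$ to $P\mapsto\{y\in Y\mid \exists x\in P,\ f(x)\le y\}$. $\mathrm{Dn}$ sends a poset $(X,\le)$ to the set of its downward closed subsets ordered by inclusion $\subseteq$, and a monotone $f:X\to Y$ to $P\mapsto\{y\in Y\mid\exists x\in P,\ y\le f(x)\}$. A monad on a category is a triple $(T,\eta,\mu)$ with $T$ an endofunctor and natural transformations $\eta:\mathrm{id}\Rightarrow T$, $\mu:TT\Rightarrow T$ satisfying $\mu_X\circ\eta_{TX}=\mathrm{id}=\mu_X\circ T(\eta_X)$ and $\mu_X\circ T(\mu_X)=\mu_X\circ\mu_{TX}$. *)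

From Stdlib Require Import ClassicalEpsilon FunctionalExtensionality PropExtensionality ProofIrrelevance.

Set Implicit Arguments.

Record Poset := {
  carrier :> Type;
  le : carrier -> carrier -> Prop;
  le_refl : forall x, le x x;
  le_trans : forall x y z, le x y -> le y z -> le x z;
  le_antisym : forall x y, le x y -> le y x -> x = y
}.
Arguments le {p} _ _.

Record Mono (X Y : Poset) := {
  mfun :> X -> Y;
  mfun_mono : forall x y, le x y -> le (mfun x) (mfun y)
}.

Definition upset (X : Poset) := { P : X -> Prop | forall x y, P x -> le x y -> P y }.
Definition dnset (X : Poset) := { P : X -> Prop | forall x y, P y -> le x y -> P x }.

Lemma sig_pred_ext (X : Type) (C : (X -> Prop) -> Prop) (P Q : {p : X -> Prop | C p}) :
  (forall x, proj1_sig P x <-> proj1_sig Q x) -> P = Q.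
Proof.
  destruct P as [p hp], Q as [q hq]; simpl; intro H.
  assert (p = q) as <-.
  { apply functional_extensionality; intro x; apply propositional_extensionality; apply H. }
  f_equal; apply proof_irrelevance.
Qed.

Definition Up (X : Poset) : Poset.
Proof.
  refine {| carrier := upset X;
            le := fun P Q => forall x, proj1_sig Q x -> proj1_sig P x |}.
  - auto.
  - intros P Q R h1 h2 x hx; auto.
  - intros P Q h1 h2; apply sig_pred_ext; intro x; split; auto.
Defined.

Definition Dn (X : Poset) : Poset.
Proof.
  refine {| carrier := dnset X;
            le := fun P Q => forall x, proj1_sig P x -> proj1_sig Q x |}.
  - auto.
  - intros P Q R h1 h2 x hx; auto.
  - intros P Q h1 h2; apply sig_pred_ext; intro x; split; auto.
Defined.

Definition Up_obj {X Y : Poset} (f : Mono X Y) (P : Up X) : Up Y.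
Proof.
  exists (fun y => exists x, proj1_sig P x /\ le (f x) y).
  intros y y' [x [hx hle]] hyy'. exists x; split; auto.
  eapply le_trans; eauto.
Defined.

Definition Up_map {X Y : Poset} (f : Mono X Y) : Mono (Up X) (Up Y).
Proof.
  exists (Up_obj f).
  intros P Q hPQ y [x [hx hle]]; simpl. exists x; split; auto.
Defined.

Definition Dn_obj {X Y : Poset} (f : Mono X Y) (P : Dn X) : Dn Y.
Proof.
  exists (fun y => exists x, proj1_sig P x /\ le y (f x)).
  intros y y' [x [hx hle]] hyy'. exists x; split; auto.
  eapply le_trans; eauto.
Defined.

Definition Dn_map {X Y : Poset} (f : Mono X Y) : Mono (Dn X) (Dn Y).
Proof.
  exists (Dn_obj f).
  intros P Q hPQ y [x [hx hle]]; simpl. exists x; split; auto.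
Defined.

Definition UpDn (X : Poset) : Poset := Up (Dn X).
Definition UpDn_map {X Y : Poset} (f : Mono X Y) : Mono (UpDn X) (UpDn Y) :=
  Up_map (Dn_map f).

Definition is_UpDn_monad
  (eta : forall X : Poset, Mono X (UpDn X))
  (mu : forall X : Poset, Mono (UpDn (UpDn X)) (UpDn X)) : Prop :=
  (forall (X Y : Poset) (f : Mono X Y) (x : X),
      UpDn_map f (eta X x) = eta Y (f x)) /\
  (forall (X Y : Poset) (f : Mono X Y) (t : UpDn (UpDn X)),
      UpDn_map f (mu X t) = mu Y (UpDn_map (UpDn_map f) t)) /\
  (forall (X : Poset) (t : UpDn X), mu X (eta (UpDn X) t) = t) /\
  (forall (X : Poset) (t : UpDn X), mu X (UpDn_map (eta X) t) = t) /\
  (forall (X : Poset) (t : UpDn (UpDn (UpDn X))),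
      mu X (UpDn_map (mu X) t) = mu X (mu (UpDn X) t)).

(* Identify t : Up (Dn X) with the predicate "D ∈ t" on down-sets, as in the
   double-powerset (continuation) monad.  Then [eta x] is the set of down-sets
   containing x, [UpDn_map f t] is the set of D whose preimage under f lies in
   t, and [mu s] is the set of D such that the down-set [upsets_containing D]
   of Up (Dn X) lies in s.  Every monad law then reduces to computing the
   preimage of [upsets_containing D] under eta, mu or [UpDn_map f]. *)
From Stdlib Require Import Setoid.

Local Notation "x ∈ P" := (proj1_sig P x) (at level 70, no associativity).

Definition dn_preimage {X Y : Poset} (f : Mono X Y) (D : Dn Y) : Dn X.
Proof.
  exists (fun x => f x ∈ D).
  intros x y hy hxy. exact (proj2_sig D _ _ hy (mfun_mono f _ _ hxy)).
Defined.

Definition upsets_containing {X : Poset} (D : Dn X) : Dn (UpDn X).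
Proof.
  exists (fun U : UpDn X => D ∈ U).
  intros U V hV hUV. exact (hUV D hV).
Defined.

Lemma upsets_containing_mono {X : Poset} (D D' : Dn X) :
  le D D' -> le (upsets_containing D) (upsets_containing D').
Proof. intros hDD' U hU. exact (proj2_sig U D D' hU hDD'). Qed.

Definition downsets_containing {X : Poset} (x : X) : UpDn X.
Proof.
  exists (fun D : Dn X => x ∈ D).
  intros D D' hD hDD'. exact (hDD' x hD).
Defined.

Definition eta (X : Poset) : Mono X (UpDn X).
Proof.
  exists downsets_containing.
  intros x y hxy D hD. exact (proj2_sig D x y hD hxy).
Defined.

(* Equivalently, [mu_obj s] is the set of D lying in every member of some
   element of s. *)
Definition mu_obj {X : Poset} (s : UpDn (UpDn X)) : UpDn X.
Proof.
  exists (fun D : Dn X => upsets_containing D ∈ s).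
  intros D D' hD hDD'. exact (proj2_sig s _ _ hD (upsets_containing_mono D D' hDD')).
Defined.

Definition mu (X : Poset) : Mono (UpDn (UpDn X)) (UpDn X).
Proof.
  exists mu_obj.
  intros s s' hss' D hD. exact (hss' _ hD).
Defined.

Lemma mem_mu (X : Poset) (s : UpDn (UpDn X)) (D : Dn X) :
  D ∈ mu X s <-> upsets_containing D ∈ s.
Proof. reflexivity. Qed.

Lemma mem_UpDn_map (X Y : Poset) (f : Mono X Y) (t : UpDn X) (D : Dn Y) :
  D ∈ UpDn_map f t <-> dn_preimage f D ∈ t.
Proof.
  split.
  - intros [E [hE hED]]. apply (proj2_sig t E _ hE).
    intros x hx. apply hED. exists x. split; [exact hx | apply le_refl].
  - intros hD. exists (dn_preimage f D). split; [exact hD |].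
    intros y [x [hx hyx]]. exact (proj2_sig D y (f x) hx hyx).
Qed.

Lemma dn_preimage_eta_containing (X : Poset) (D : Dn X) :
  dn_preimage (eta X) (upsets_containing D) = D.
Proof. apply sig_pred_ext. reflexivity. Qed.

Lemma dn_preimage_mu_containing (X : Poset) (D : Dn X) :
  dn_preimage (mu X) (upsets_containing D) = upsets_containing (upsets_containing D).
Proof. apply sig_pred_ext. reflexivity. Qed.

Lemma dn_preimage_UpDn_map_containing (X Y : Poset) (f : Mono X Y) (D : Dn Y) :
  dn_preimage (UpDn_map f) (upsets_containing D)
  = upsets_containing (dn_preimage f D).
Proof. apply sig_pred_ext. intro t. apply mem_UpDn_map. Qed.

Theorem mainTheorem4 :
  exists (eta : forall X : Poset, Mono X (UpDn X))
         (mu : forall X : Poset, Mono (UpDn (UpDn X)) (UpDn X)),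
    is_UpDn_monad eta mu.
Proof.
  exists eta, mu.
  repeat split; intros; apply sig_pred_ext; intro D.
  - rewrite mem_UpDn_map. reflexivity.
  - rewrite mem_UpDn_map, !mem_mu, mem_UpDn_map, dn_preimage_UpDn_map_containing.
    reflexivity.
  - reflexivity.
  - rewrite mem_mu, mem_UpDn_map, dn_preimage_eta_containing. reflexivity.
  - rewrite !mem_mu, mem_UpDn_map, dn_preimage_mu_containing. reflexivity.
Qed.
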